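(* Let $\alpha=m+n\gamma^{-1}\in\mathbb{Z}[\gamma]$ ($m,n\in\mathbb{Z}$) with $\alpha>0$, and let $Q_\alpha$ be the set of quads representing $\alpha$. Then $Q_\alpha$ is infinite and its elements have pairwise distinct sizes. Listing its elements in order of increasing size, the sizes form a sequence of consecutive integers, while the degrees, the bi-degrees (for the componentwise partial order on $\mathbb{N}^2$) and the second partial degrees are strictly increasing. The element of $Q_\alpha$ of smallest size has degree $|m|+|n|$ and bi-degree $(|m|,|n|)$.
   Context: Let $f\colon\mathbb{Z}\to\mathbb{Z}$ be defined by $f(0)=f(1)=1$, $f(i+2)=f(i+1)+f(i)$ for all $i\in\mathbb{Z}$; $\gamma=(1+\sqrt5)/2$; $\mathbb{Z}[\gamma]=\mathbb{Z}\oplus\mathbb{Z}\gamma^{-1}$. A quad is a tuple $q=(i;a,b,c)$ of non-negative integers with $a\ge1$. It represents $\alpha\in\mathbb{Z}[\gamma]$ if $\alpha=a\gamma^{-i}+b\gamma^{-i-1}+c\gamma^{-i-2}$. Its first and second partial degrees are $d_1(q)=af(i-2)+bf(i-1)+cf(i)$ and $d_2(q)=af(i-1)+bf(i)+cf(i+1)$, its degree is $d(q)=d_1(q)+d_2(q)$, its bi-degree is $(d_1(q),d_2(q))$, and its size is $a+b+c$. *)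

From Stdlib Require Import Reals ZArith Lia Lra.
Open Scope R_scope.

Definition gamma : R := (1 + sqrt 5) / 2.

Record quad : Type := Quad { qi : nat; qa : nat; qb : nat; qc : nat }.

Definition is_quad (q : quad) : Prop := (1 <= qa q)%nat.

Definition represents (q : quad) (alpha : R) : Prop :=
  alpha = INR (qa q) * (/ gamma) ^ (qi q)
        + INR (qb q) * (/ gamma) ^ (qi q + 1)
        + INR (qc q) * (/ gamma) ^ (qi q + 2).

Definition Q (alpha : R) (q : quad) : Prop := is_quad q /\ represents q alpha.

Definition pdeg1 (f : Z -> Z) (q : quad) : Z :=
  (Z.of_nat (qa q) * f (Z.of_nat (qi q) - 2)
   + Z.of_nat (qb q) * f (Z.of_nat (qi q) - 1)
   + Z.of_nat (qc q) * f (Z.of_nat (qi q)))%Z.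

Definition pdeg2 (f : Z -> Z) (q : quad) : Z :=
  (Z.of_nat (qa q) * f (Z.of_nat (qi q) - 1)
   + Z.of_nat (qb q) * f (Z.of_nat (qi q))
   + Z.of_nat (qc q) * f (Z.of_nat (qi q) + 1))%Z.

Definition qdeg (f : Z -> Z) (q : quad) : Z := (pdeg1 f q + pdeg2 f q)%Z.

Definition qsize (q : quad) : nat := (qa q + qb q + qc q)%nat.

Definition bideg_lt (f : Z -> Z) (q q' : quad) : Prop :=
  (pdeg1 f q <= pdeg1 f q')%Z /\ (pdeg2 f q <= pdeg2 f q')%Z /\
  (pdeg1 f q, pdeg2 f q) <> (pdeg1 f q', pdeg2 f q').

(* Put φ = γ⁻¹; then φ² = 1 − φ, and since x² − xy − y² has no non-trivial
   integer zero, φ is irrational, so α has unique coordinates (x, y) with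
   α = x + yφ.  As φ(x + yφ) = y + (x − y)φ, the coordinates of the value of a
   quad (i; a, b, c) are obtained by applying this map i times to (a + c, b − c);
   thus membership in Q_α becomes an equation on coordinates.

   The successor map (i; a, b, c) ↦ (i; a−1, b+1, c+1) for a ≥ 2 and
   (i; 1, b, c) ↦ (i+1; b+1, c+1, 0) preserves the value (γ⁻ⁱ = γ⁻ⁱ⁻¹ + γ⁻ⁱ⁻²)
   and raises the size by one.  Run backwards, it leads from any quad to a
   reduced one (b = 0, or i = c = 0); a sign argument on coordinates shows that
   a reduced quad is determined by its coordinates, and a descent on |m| + |n|
   shows that some quad represents α > 0.  So Q_α is the orbit of its reduced
   element, listed by size.  For the Fibonacci function f, the successor map does
   not decrease d₁ and strictly increases d₂, and a reduced quad with coordinates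
   (m, n) has bi-degree (|m|, |n|); the theorem follows. *)

From Stdlib Require Import Reals ZArith Lia Lra.
Open Scope R_scope.

Definition phi : R := / gamma.

Lemma gamma_pos : 0 < gamma.
Proof. unfold gamma. pose proof (sqrt_pos 5). lra. Qed.

Lemma gamma_sq : gamma * gamma = gamma + 1.
Proof. unfold gamma. pose proof (sqrt_sqrt 5 ltac:(lra)). nra. Qed.

Lemma phi_pos : 0 < phi.
Proof. exact (Rinv_0_lt_compat _ gamma_pos). Qed.

(* φ is a root of X² + X − 1; this is the identity γ⁻ⁱ = γ⁻ⁱ⁻¹ + γ⁻ⁱ⁻². *)
Lemma phi_sq : phi * phi = 1 - phi.
Proof.
  unfold phi. pose proof gamma_pos as Hg. pose proof gamma_sq as Hsq.
  replace (1 - / gamma) with ((gamma * gamma - gamma) / (gamma * gamma)) by (field; lra).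
  rewrite Hsq at 1. field. lra.
Qed.

Lemma phi_lt1 : phi < 1.
Proof. pose proof phi_sq. pose proof phi_pos. nra. Qed.

(* The quadratic form x² − xy − y² has no non-trivial integer zero:
   reducing modulo 2 forces x and y even, and (x/2, y/2) is a smaller zero. *)
Lemma golden_form_zero (x y : Z) :
  (x * x - x * y - y * y = 0)%Z -> x = 0%Z /\ y = 0%Z.
Proof.
  remember (Z.to_nat (Z.abs x + Z.abs y)) as N eqn:HN.
  revert x y HN. induction N as [N IH] using lt_wf_ind. intros x y HN He.
  destruct (Z.Even_or_Odd x) as [[k ->]|[k ->]];
    destruct (Z.Even_or_Odd y) as [[l ->]|[l ->]]; try (exfalso; nia).
  destruct (Z.eq_dec (Z.abs k + Z.abs l) 0) as [E|E]; [lia|].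
  assert (Hkl : (k * k - k * l - l * l = 0)%Z) by nia.
  destruct (IH (Z.to_nat (Z.abs k + Z.abs l)) ltac:(lia) k l eq_refl Hkl). lia.
Qed.

Lemma phi_irrational (x y : Z) : IZR x + IZR y * phi = 0 -> x = 0%Z /\ y = 0%Z.
Proof.
  intro H. apply golden_form_zero, eq_IZR.
  rewrite !minus_IZR, !mult_IZR.
  replace (IZR x) with (- IZR y * phi) by lra.
  replace (- IZR y * phi * (- IZR y * phi) - - IZR y * phi * IZR y - IZR y * IZR y)
    with (IZR y * IZR y * (phi * phi + phi - 1)) by ring.
  rewrite phi_sq. ring.
Qed.

Lemma coords_unique (x y x' y' : Z) :
  IZR x + IZR y * phi = IZR x' + IZR y' * phi -> x = x' /\ y = y'.
Proof.
  intro H. destruct (phi_irrational (x - x') (y - y')); [rewrite !minus_IZR; lra | lia].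
Qed.

(* Multiplication by φ in coordinates: φ(x + yφ) = y + (x − y)φ. *)
Definition mulphi (p : Z * Z) : Z * Z := (snd p, (fst p - snd p)%Z).

Lemma mulphi_inj (p p' : Z * Z) : mulphi p = mulphi p' -> p = p'.
Proof.
  destruct p as [x y], p' as [x' y']. unfold mulphi; cbn. intro E.
  injection E as E1 E2. f_equal; lia.
Qed.

Lemma pow_phi_coords (i : nat) (x y : Z) :
  phi ^ i * (IZR x + IZR y * phi) =
  IZR (fst (Nat.iter i mulphi (x, y))) + IZR (snd (Nat.iter i mulphi (x, y))) * phi.
Proof.
  induction i as [|i IH]; [simpl; ring|].
  simpl Nat.iter. destruct (Nat.iter i mulphi (x, y)) as [u v]. cbn in IH |- *.
  rewrite Rmult_assoc, IH, minus_IZR.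
  transitivity (IZR v * (phi * phi) + IZR u * phi); [ring|]. rewrite phi_sq. ring.
Qed.

(* Coordinates of the value of a quad: φⁱ(a + bφ + cφ²) = φⁱ((a + c) + (b − c)φ). *)
Definition coord (q : quad) : Z * Z :=
  Nat.iter (qi q) mulphi
    (Z.of_nat (qa q + qc q), (Z.of_nat (qb q) - Z.of_nat (qc q))%Z).

Lemma coord_shift (i a b c : nat) :
  coord (Quad (S i) a b c) = mulphi (coord (Quad i a b c)).
Proof. reflexivity. Qed.

Lemma quad_value (q : quad) :
  INR (qa q) * (/ gamma) ^ qi q + INR (qb q) * (/ gamma) ^ (qi q + 1)
  + INR (qc q) * (/ gamma) ^ (qi q + 2)
  = IZR (fst (coord q)) + IZR (snd (coord q)) * phi.
Proof.
  destruct q as [i a b c]. unfold coord. cbn [qi qa qb qc].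
  fold phi. rewrite <- pow_phi_coords.
  rewrite Nat2Z.inj_add, plus_IZR, minus_IZR, <- !INR_IZR_INZ, !pow_add.
  transitivity (phi ^ i * (INR a + INR b * phi + INR c * (phi * phi))); [simpl; ring|].
  rewrite phi_sq. ring.
Qed.

Lemma Q_coord (m n : Z) (q : quad) :
  Q (IZR m + IZR n * / gamma) q <-> is_quad q /\ coord q = (m, n).
Proof.
  unfold Q, represents. rewrite quad_value. fold phi.
  split; intros [Hq Hc]; split; try exact Hq.
  - destruct (coord q) as [x y]. cbn in Hc.
    destruct (coords_unique _ _ _ _ Hc). subst. reflexivity.
  - rewrite Hc. reflexivity.
Qed.

(* The successor of a quad: trade one γ⁻ⁱ for γ⁻ⁱ⁻¹ + γ⁻ⁱ⁻², shifting the
   exponent when the leading coefficient is exhausted. *)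
Definition succ (q : quad) : quad :=
  match q with
  | Quad i 1 b c => Quad (S i) (S b) (S c) 0
  | Quad i a b c => Quad i (a - 1) (S b) (S c)
  end.

Definition orbit (q : quad) (k : nat) : quad := Nat.iter k succ q.

Lemma succ_is_quad (q : quad) : is_quad q -> is_quad (succ q).
Proof. destruct q as [i [|[|a]] b c]; unfold is_quad; cbn; lia. Qed.

Lemma qsize_succ (q : quad) : is_quad q -> qsize (succ q) = S (qsize q).
Proof. destruct q as [i [|[|a]] b c]; unfold is_quad, qsize; cbn; lia. Qed.

Lemma coord_succ (q : quad) : is_quad q -> coord (succ q) = coord q.
Proof.
  destruct q as [i [|[|a]] b c]; unfold is_quad; cbn [qa]; intro Ha; [lia| |].
  - unfold coord; cbn [succ qi qa qb qc]. rewrite Nat.iter_succ_r.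
    unfold mulphi; cbn [fst snd]. f_equal; f_equal; lia.
  - unfold coord; cbn [succ qi qa qb qc]. f_equal; f_equal; lia.
Qed.

Lemma orbit_invariants (q : quad) (k : nat) : is_quad q ->
  is_quad (orbit q k) /\ coord (orbit q k) = coord q /\
  qsize (orbit q k) = (qsize q + k)%nat.
Proof.
  intro Hq. induction k as [|k [H1 [H2 H3]]]; [cbn; auto with arith|].
  change (orbit q (S k)) with (succ (orbit q k)).
  rewrite coord_succ, qsize_succ by exact H1.
  split; [exact (succ_is_quad _ H1)|]. split; [exact H2|lia].
Qed.

(* A quad is reduced when it has no predecessor: b = 0, or i = c = 0. *)
Definition reduced (q : quad) : Prop :=
  qb q = 0%nat \/ (qc q = 0%nat /\ qi q = 0%nat).

(* Every quad is a successor-iterate of a reduced quad (undo succ while b ≥ 1). *)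
Lemma reduced_ancestor (q : quad) : is_quad q ->
  exists q0 k, is_quad q0 /\ reduced q0 /\ orbit q0 k = q.
Proof.
  remember (qsize q) as N eqn:HN. revert q HN.
  induction N as [N IH] using lt_wf_ind. intros [i a b c] HN Ha.
  unfold qsize, is_quad in *; cbn in HN, Ha.
  destruct b as [|b]; [exists (Quad i a 0 c), 0%nat; unfold reduced; cbn; auto|].
  destruct c as [|c]; [destruct i as [|i]|].
  - exists (Quad 0 a (S b) 0), 0%nat. unfold reduced; cbn; auto.
  - destruct a as [|a]; [lia|].
    destruct (IH (qsize (Quad i 1 a b)) ltac:(unfold qsize; cbn; lia) _ eq_refl)
      as (q0 & k & H0 & Hr & Hk); [unfold is_quad; cbn; lia|].
    exists q0, (S k). split; [exact H0|]. split; [exact Hr|].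
    change (succ (orbit q0 k) = Quad (S i) (S a) (S b) 0). rewrite Hk. reflexivity.
  - destruct (IH (qsize (Quad i (S a) b c)) ltac:(unfold qsize; cbn; lia) _ eq_refl)
      as (q0 & k & H0 & Hr & Hk); [unfold is_quad; cbn; lia|].
    exists q0, (S k). split; [exact H0|]. split; [exact Hr|].
    change (succ (orbit q0 k) = Quad i a (S b) (S c)). rewrite Hk.
    destruct a as [|a]; [lia|]. cbn. f_equal; lia.
Qed.

(* Coordinates (x, y) with x, y of strictly opposite signs and x + y of the sign
   of y; this pattern is preserved by mulphi. *)
Definition alternating (p : Z * Z) : Prop :=
  let (x, y) := p in
  ((x <= 0)%Z /\ (1 <= y)%Z /\ (1 <= x + y)%Z) \/
  ((1 <= x)%Z /\ (y <= -1)%Z /\ (x + y <= 0)%Z).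

(* Quads with b = 0 and i ≥ 1 have alternating coordinates, whereas quads with
   i = c = 0 have coordinates (a, b) with a ≥ 1, b ≥ 0. *)
Lemma coord_alternating (j a c : nat) : (1 <= a)%nat ->
  alternating (coord (Quad (S j) a 0 c)).
Proof.
  intro Ha. induction j as [|j IH].
  - unfold coord, alternating, mulphi; cbn. lia.
  - rewrite coord_shift. destruct (coord (Quad (S j) a 0 c)) as [x y].
    unfold alternating, mulphi in *; cbn. lia.
Qed.

Lemma reduced_unique (q q' : quad) : is_quad q -> is_quad q' ->
  reduced q -> reduced q' -> coord q = coord q' -> q = q'.
Proof.
  destruct q as [i a b c]. revert a b c q'.
  induction i as [|i IH]; intros a b c [[|i'] a' b' c'] Ha Ha' Hr Hr' Hc;
    unfold is_quad, reduced in *; cbn in Ha, Ha', Hr, Hr'.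
  - unfold coord in Hc; cbn in Hc. injection Hc as E1 E2. f_equal; lia.
  - exfalso. destruct Hr' as [-> | [_ E]]; [|discriminate].
    pose proof (coord_alternating i' a' c' Ha') as H. rewrite <- Hc in H.
    unfold coord, alternating in H; cbn in H. lia.
  - exfalso. destruct Hr as [-> | [_ E]]; [|discriminate].
    pose proof (coord_alternating i a c Ha) as H. rewrite Hc in H.
    unfold coord, alternating in H; cbn in H. lia.
  - destruct Hr as [-> | [_ E]]; [|discriminate].
    destruct Hr' as [-> | [_ E]]; [|discriminate].
    rewrite !coord_shift in Hc. apply mulphi_inj in Hc.
    assert (E : Quad i a 0 c = Quad i' a' 0 c').
    { apply IH; unfold is_quad, reduced; cbn; auto. }
    injection E as -> -> ->. reflexivity.
Qed.

Lemma quad_of_nonneg_coords (m n : Z) : (0 <= m)%Z -> (0 <= n)%Z -> (0 < m + n)%Z ->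
  exists q, is_quad q /\ coord q = (m, n).
Proof.
  intros Hm Hn Hmn. destruct (Z.eq_dec m 0) as [->|E].
  - exists (Quad 1 (Z.to_nat n) 0 0). unfold is_quad, coord, mulphi; cbn.
    split; [lia|]. f_equal; lia.
  - exists (Quad 0 (Z.to_nat m) (Z.to_nat n) 0). unfold is_quad, coord; cbn.
    split; [lia|]. f_equal; lia.
Qed.

(* Since (m, n) = mulphi (m + n, m), a quad for (m + n, m) yields one for (m, n). *)
Lemma quad_of_shifted_coords (m n : Z) :
  (exists q, is_quad q /\ coord q = ((m + n)%Z, m)) ->
  exists q, is_quad q /\ coord q = (m, n).
Proof.
  intros [[i a b c] [Hq Hc]]. exists (Quad (S i) a b c).
  split; [exact Hq|]. rewrite coord_shift, Hc. unfold mulphi; cbn. f_equal; lia.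
Qed.

(* The corresponding element (m + n) + mφ = (m + nφ)/φ is positive as well. *)
Lemma shifted_pos (m n : Z) : 0 < IZR m + IZR n * phi -> 0 < IZR (m + n) + IZR m * phi.
Proof.
  intro H. pose proof phi_pos.
  assert (E : phi * (IZR (m + n) + IZR m * phi) = IZR m + IZR n * phi).
  { rewrite plus_IZR.
    transitivity ((IZR m + IZR n) * phi + IZR m * (phi * phi)); [ring|].
    rewrite phi_sq. ring. }
  rewrite <- E in H. nra.
Qed.

Lemma exists_quad (m n : Z) : 0 < IZR m + IZR n * phi ->
  exists q, is_quad q /\ coord q = (m, n).
Proof.
  remember (Z.to_nat (Z.abs m + Z.abs n)) as N eqn:HN. revert m n HN.
  induction N as [N IH] using lt_wf_ind. intros m n HN Hpos.
  pose proof phi_pos. pose proof phi_lt1.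
  destruct (Z_le_gt_dec 0 m) as [Hm|Hm]; destruct (Z_le_gt_dec 0 n) as [Hn|Hn].
  - apply quad_of_nonneg_coords; [lia|lia|].
    destruct (Z.eq_dec (m + n) 0) as [E|E]; [|lia].
    assert (m = 0%Z /\ n = 0%Z) as [-> ->] by lia. cbn in Hpos. lra.
  - apply quad_of_shifted_coords.
    assert (Hm' : (0 < m)%Z).
    { destruct (Z.eq_dec m 0) as [->|]; [|lia].
      assert (IZR n < 0) by (apply IZR_lt; lia). cbn in Hpos. nra. }
    destruct (Z_le_gt_dec 0 (m + n)).
    + apply quad_of_nonneg_coords; lia.
    + apply (IH (Z.to_nat (Z.abs (m + n) + Z.abs m))); [lia|reflexivity|].
      apply shifted_pos, Hpos.
  - apply quad_of_shifted_coords.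
    assert (Hmn : (0 < m + n)%Z).
    { apply lt_IZR. rewrite plus_IZR. assert (0 <= IZR n) by (apply IZR_le; lia). nra. }
    apply (IH (Z.to_nat (Z.abs (m + n) + Z.abs m))); [lia|reflexivity|].
    apply shifted_pos, Hpos.
  - assert (IZR m < 0) by (apply IZR_lt; lia).
    assert (IZR n < 0) by (apply IZR_lt; lia). nra.
Qed.

Lemma Q_orbit (m n : Z) : 0 < IZR m + IZR n * / gamma ->
  exists q0, is_quad q0 /\ reduced q0 /\ coord q0 = (m, n) /\
    forall q, Q (IZR m + IZR n * / gamma) q <-> exists k, orbit q0 k = q.
Proof.
  intro Hpos. destruct (exists_quad m n Hpos) as (q1 & Hq1 & Hc1).
  destruct (reduced_ancestor q1 Hq1) as (q0 & k1 & Hq0 & Hr0 & Hk1).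
  assert (Hc0 : coord q0 = (m, n)).
  { destruct (orbit_invariants q0 k1 Hq0) as (_ & E & _). rewrite <- E, Hk1. exact Hc1. }
  exists q0. split; [exact Hq0|]. split; [exact Hr0|]. split; [exact Hc0|].
  intro q. rewrite Q_coord. split.
  - intros [Hq Hc]. destruct (reduced_ancestor q Hq) as (q0' & k & Hq0' & Hr0' & Hk).
    exists k. rewrite <- Hk. f_equal. apply reduced_unique; try assumption.
    destruct (orbit_invariants q0' k Hq0') as (_ & E & _). congruence.
  - intros [k <-]. destruct (orbit_invariants q0 k Hq0) as (H1 & H2 & _).
    split; [exact H1|]. congruence.
Qed.

Section FibonacciDegrees.
Open Scope Z_scope.

Variable f : Z -> Z.
Hypothesis hf0 : f 0 = 1.
Hypothesis hf1 : f 1 = 1.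
Hypothesis hfrec : forall i, f (i + 2) = f (i + 1) + f i.

Lemma f_back (k : Z) : f k = f (k - 1) + f (k - 2).
Proof. replace k with (k - 2 + 2) at 1 by lia. rewrite hfrec. do 2 f_equal. lia. Qed.

Lemma f_m1 : f (-1) = 0.
Proof. pose proof (f_back 1). cbn in H. lia. Qed.

Lemma f_m2 : f (-2) = 1.
Proof. pose proof (f_back 0). pose proof f_m1. cbn in H. lia. Qed.

Lemma f_pos (k : Z) : 0 <= k -> 1 <= f k.
Proof.
  intro Hk. rewrite <- (Z2Nat.id k Hk).
  assert (H : forall n : nat, 1 <= f (Z.of_nat n) /\ 1 <= f (Z.of_nat n + 1)).
  { induction n as [|n [IH1 IH2]]; [cbn; lia|].
    rewrite Nat2Z.inj_succ, <- Z.add_1_r. split; [exact IH2|].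
    rewrite <- Z.add_assoc, hfrec. lia. }
  apply H.
Qed.

Lemma f_nonneg (k : Z) : -2 <= k -> 0 <= f k.
Proof.
  intro Hk. destruct (Z_le_gt_dec 0 k) as [H|H]; [pose proof (f_pos k H); lia|].
  assert (k = -1 \/ k = -2) as [-> | ->] by lia; [rewrite f_m1 | rewrite f_m2]; lia.
Qed.

(* Along succ, in both cases, d₁ grows by 2 f(i−1) ≥ 0 and d₂ by 2 f(i) ≥ 2. *)
Lemma pdeg_succ (q : quad) : is_quad q ->
  pdeg1 f q <= pdeg1 f (succ q) /\ pdeg2 f q < pdeg2 f (succ q).
Proof.
  destruct q as [i a b c]; unfold is_quad; cbn [qa]; intro Ha.
  set (I := Z.of_nat i).
  pose proof (f_back I). pose proof (f_back (I + 1)).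
  pose proof (f_nonneg (I - 2) ltac:(lia)). pose proof (f_nonneg (I - 1) ltac:(lia)).
  pose proof (f_pos I ltac:(lia)). pose proof (f_pos (I + 1) ltac:(lia)).
  destruct a as [|[|a]]; [lia| |]; unfold pdeg1, pdeg2; cbn [succ qi qa qb qc].
  - rewrite (Nat2Z.inj_succ i). fold I.
    replace (Z.succ I - 2) with (I - 1) by lia. replace (Z.succ I - 1) with I by lia.
    replace (Z.succ I) with (I + 1) in * by lia.
    replace (I + 1 - 1) with I in * by lia. replace (I + 1 - 2) with (I - 1) in * by lia.
    rewrite !Nat2Z.inj_succ. cbn [Z.of_nat]. nia.
  - fold I. replace (S (S a) - 1)%nat with (S a) by lia.
    replace (I + 1 - 1) with I in * by lia. replace (I + 1 - 2) with (I - 1) in * by lia.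
    rewrite !Nat2Z.inj_succ. nia.
Qed.

Lemma coord_b0_degrees (i a c : nat) :
  let q := Quad i a 0 c in
  coord q = (pdeg1 f q, - pdeg2 f q) \/ coord q = (- pdeg1 f q, pdeg2 f q).
Proof.
  induction i as [|i IH]; cbv zeta in *.
  - left. unfold coord, pdeg1, pdeg2; cbn [qi qa qb qc Nat.iter Z.of_nat].
    cbn [Z.sub Z.add Z.opp]. rewrite f_m1, f_m2, hf0, hf1.
    change (Nat.iter 0 mulphi ?p) with p. rewrite Nat2Z.inj_add. f_equal; lia.
  - rewrite coord_shift. unfold pdeg1, pdeg2 in *; cbn [qi qa qb qc] in *.
    set (I := Z.of_nat i) in *. rewrite (Nat2Z.inj_succ i). fold I.
    replace (Z.succ I - 2) with (I - 1) by lia. replace (Z.succ I - 1) with I by lia.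
    replace (Z.succ I) with (I + 1) by lia. replace (I + 1 + 1) with (I + 2) by lia.
    rewrite hfrec.
    destruct IH as [E|E]; rewrite E; unfold mulphi; cbn [fst snd];
      [right|left]; f_equal; rewrite (f_back I); ring.
Qed.

Lemma reduced_degrees (q : quad) (m n : Z) : reduced q -> coord q = (m, n) ->
  pdeg1 f q = Z.abs m /\ pdeg2 f q = Z.abs n.
Proof.
  destruct q as [i a b c]. unfold reduced; cbn [qi qa qb qc].
  intros [-> | [-> ->]] Hc.
  - set (I := Z.of_nat i).
    pose proof (f_nonneg (I - 2) ltac:(lia)). pose proof (f_nonneg (I - 1) ltac:(lia)).
    pose proof (f_nonneg I ltac:(lia)). pose proof (f_nonneg (I + 1) ltac:(lia)).
    assert (0 <= pdeg1 f (Quad i a 0 c)) by (unfold pdeg1; cbn [qi qa qb qc]; fold I; nia).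
    assert (0 <= pdeg2 f (Quad i a 0 c)) by (unfold pdeg2; cbn [qi qa qb qc]; fold I; nia).
    destruct (coord_b0_degrees i a c) as [E|E]; rewrite Hc in E;
      injection E as -> ->; lia.
  - unfold coord in Hc; cbn [qi qa qb qc Nat.iter] in Hc. injection Hc as <- <-.
    unfold pdeg1, pdeg2; cbn [qi qa qb qc Z.of_nat Z.sub Z.add Z.opp].
    rewrite f_m1, f_m2, hf0, hf1. lia.
Qed.

End FibonacciDegrees.

Theorem mainTheorem16
  (f : Z -> Z)
  (hf0 : f 0%Z = 1%Z) (hf1 : f 1%Z = 1%Z)
  (hfrec : forall i : Z, f (i + 2)%Z = (f (i + 1) + f i)%Z)
  (m n : Z)
  (halpha : 0 < IZR m + IZR n * / gamma) :
  let alpha := IZR m + IZR n * / gamma in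
  (forall q q' : quad, Q alpha q -> Q alpha q' -> qsize q = qsize q' -> q = q') /\
  exists s : nat -> quad,
    (forall k, Q alpha (s k)) /\
    (forall q, Q alpha q -> exists k, s k = q) /\
    (forall k l, s k = s l -> k = l) /\
    (forall k, qsize (s (S k)) = S (qsize (s k))) /\
    (forall k, (qdeg f (s k) < qdeg f (s (S k)))%Z) /\
    (forall k, bideg_lt f (s k) (s (S k))) /\
    (forall k, (pdeg2 f (s k) < pdeg2 f (s (S k)))%Z) /\
    qdeg f (s 0%nat) = (Z.abs m + Z.abs n)%Z /\
    pdeg1 f (s 0%nat) = Z.abs m /\ pdeg2 f (s 0%nat) = Z.abs n.
Proof.
  intro alpha.
  destruct (Q_orbit m n halpha) as (q0 & Hq0 & Hr0 & Hc0 & HQ).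
  assert (Hsize : forall k, qsize (orbit q0 k) = (qsize q0 + k)%nat)
    by (intro k; apply orbit_invariants, Hq0).
  assert (Hdeg : forall k, (pdeg1 f (orbit q0 k) <= pdeg1 f (orbit q0 (S k)))%Z /\
                           (pdeg2 f (orbit q0 k) < pdeg2 f (orbit q0 (S k)))%Z)
    by (intro k; apply (pdeg_succ f hf0 hf1 hfrec), orbit_invariants, Hq0).
  destruct (reduced_degrees f hf0 hf1 hfrec q0 m n Hr0 Hc0) as [D1 D2].
  split.
  { intros q q' Hq Hq' Hs. apply HQ in Hq as [k <-]. apply HQ in Hq' as [l <-].
    rewrite !Hsize in Hs. f_equal. lia. }
  exists (orbit q0).
  split; [intro k; apply HQ; exists k; reflexivity|].
  split; [intros q Hq; apply HQ, Hq|].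
  split; [intros k l E; apply (f_equal qsize) in E; rewrite !Hsize in E; lia|].
  split; [intro k; rewrite !Hsize; lia|].
  split; [intro k; destruct (Hdeg k); unfold qdeg; lia|].
  split.
  { intro k. destruct (Hdeg k). unfold bideg_lt.
    split; [lia|]. split; [lia|]. intro E. injection E as _ E.
    change (orbit q0 (S k)) with (succ (orbit q0 k)) in *. lia. }
  split; [intro k; apply Hdeg|].
  change (orbit q0 0) with q0. unfold qdeg. rewrite D1, D2. auto.
Qed.
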